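(* Let $p$ be a prime and $G$ a finite $p$-group whose commutator subgroup $G'$ is cyclic of order $p$ and contained in the centre $Z(G)$. Assume every non-linear irreducible character of $G$ is faithful. Then for every $x\in G\setminus Z(G)$ one has $\mathrm{nr}(x)\notin\mathbb{Z}_p[G]$.
   Context: $\mathrm{nr}$ denotes the reduced norm of the $\mathbb{Q}_p$-algebra $\mathbb{Q}_p[G]$, with values in $\zeta(\mathbb{Q}_p[G])\subseteq\mathbb{Q}_p[G]$. *)

From HB Require Import structures.
From mathcomp Require Import all_boot all_order all_algebra all_fingroup all_solvable all_field all_character.
Set Implicit Arguments. Unset Strict Implicit. Unset Printing Implicit Defensive.
Import Order.TTheory GRing.Theory Num.Theory.
Local Open Scope ring_scope.

(* Coefficient at g of the reduced norm nr(x) of x in Q_p[G] (equivalently in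
   Q[G], or in any splitting field of char 0), computed through the
   Wedderburn decomposition over an algebraically closed field:
     nr(x) = sum_{chi in Irr G} det(rho_chi(x)) e_chi,
     e_chi = chi(1)/|G| sum_g chi(g^-1) g.
   Here det(rho_chi(x)) is (cfDet chi) x. *)
Definition nr_coeff (gT : finGroupType) (G : {group gT}) (x g : gT) : algC :=
  (#|G|%:R)^-1 * \sum_(i : Iirr G) (cfDet 'chi_i) x * 'chi_i 1%g * 'chi_i (g^-1)%g.

(* z is a rational number lying in Z_p (i.e. in Z_(p) = Q ∩ Z_p). *)
Definition p_integral (p : nat) (z : algC) : Prop :=
  exists (a : int) (b : nat), ~~ (p %| b)%N /\ z = a%:~R / b%:R.

Definition nr_in_Zp_group_ring (p : nat) (gT : finGroupType) (G : {group gT}) (x : gT) : Prop :=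
  forall g, g \in G -> p_integral p (nr_coeff G x g).

From HB Require Import structures.
From mathcomp Require Import all_boot all_order all_algebra all_fingroup all_solvable all_field all_character.
Set Implicit Arguments. Unset Strict Implicit. Unset Printing Implicit Defensive.
Import Order.TTheory GRing.Theory Num.Theory.
Local Open Scope ring_scope.

(* The coefficient of nr(x) at x is (1/|G|) sum_chi det(rho_chi(x)) chi(1) chi(x^-1).
   A linear chi contributes 1, and there are |G : G'| of them; a non-linear chi is
   faithful, so its centre is Z(G), and since G' <= Z(G) it vanishes off Z(G).
   Hence the coefficient is |G : G'| / |G| = 1/|G'| = 1/p, which is not p-integral. *)

Section IrrVanishing.

Variables (gT : finGroupType) (G : {group gT}).

(* An irreducible representation is scalar on the centre of its character, so
   [chi (x ^ y) = chi (x * [~ x, y])] is a scalar multiple of [chi x]. *)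
Lemma irr_vanish_commg (i : Iirr G) x y :
  x \in G -> y \in G ->
  [~ x, y]%g \in 'Z('chi_i)%CF -> [~ x, y]%g \notin cfker 'chi_i -> 'chi_i x = 0.
Proof.
move=> Gx Gy; have Gxy : [~ x, y]%g \in G by rewrite groupR.
rewrite -irrRepr cfcenter_repr cfker_repr inE Gxy => /is_scalar_mxP[a rGxy] nKxy.
have chiJ : 'chi_i (x * [~ x, y])%g = 'chi_i x by rewrite -conjg_mulR cfunJ.
move: chiJ; rewrite -irrRepr !cfunE groupM // Gx !mulr1n repr_mxM // rGxy.
rewrite mul_mx_scalar mxtraceZ => chiJ; apply/eqP; apply: contraR nKxy => nz_chi.
have a1 : a = 1 by apply: (mulIf nz_chi); rewrite mul1r.
by apply/rkerP; rewrite rGxy a1.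
Qed.

Lemma fful_irr_vanish_off_center (i : Iirr G) x :
  (G^`(1) \subset 'Z(G))%g -> cfaithful 'chi_i ->
  x \in (G :\: 'Z(G))%g -> 'chi_i x = 0.
Proof.
move=> G'Z ffl_chi /setDP[Gx nZx].
have [y Gy nc_xy] : exists2 y, y \in G & [~ x, y]%g != 1%g.
  apply/exists_inP; apply: contraR nZx => /exists_inP nc_x.
  apply/centerP; split=> // y Gy; apply/commgP/negPn/negP => nc_xy.
  by apply: nc_x; exists y.
apply: (irr_vanish_commg Gx Gy).
  by rewrite cfcenter_fful_irr // (subsetP G'Z) ?mem_commg.
by apply: contra nc_xy => /(subsetP ffl_chi); rewrite inE.
Qed.

End IrrVanishing.

Lemma nr_coeff_self_nonlinear_vanish (gT : finGroupType) (G : {group gT}) x :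
  x \in G ->
  (forall i : Iirr G, ~~ ('chi_i \is a linear_char) -> 'chi_i (x^-1)%g = 0) ->
  nr_coeff G x x = (#|G^`(1)%g|%:R)^-1.
Proof.
move=> Gx nl_vanish.
rewrite /nr_coeff (bigID (fun i : Iirr G => 'chi_i \is a linear_char)) /=.
rewrite [X in _ + X]big1 ?addr0 => [|i /nl_vanish->]; last by rewrite mulr0.
rewrite (eq_bigr (fun=> 1)) => [|i lin_chi]; last first.
  by rewrite cfDet_id // lin_char1 // mulr1 lin_charV // mulfV ?lin_char_neq0.
rewrite sumr_const card_lin_irr -(Lagrange (der_sub 1 G)) natrM invfM -mulrA.
by rewrite mulVf ?mulr1 // pnatr_eq0 -lt0n indexg_gt0.
Qed.

Lemma not_p_integral_invn p : prime p -> ~ p_integral p (p%:R)^-1.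
Proof.
move=> p_pr [a [b [p_ndvd_b def_pinv]]].
have b_neq0 : (b%:R : algC) != 0.
  by rewrite pnatr_eq0; apply: contraNneq p_ndvd_b => ->; rewrite dvdn0.
have p_neq0 : (p%:R : algC) != 0 by rewrite pnatr_eq0 -lt0n prime_gt0.
have def_b : (b%:Z = p%:Z * a)%R.
  apply: (@intr_inj algC); rewrite rmorphM /= -[a%:~R](divfK b_neq0).
  by rewrite -def_pinv mulrA divff // mul1r.
by move/negP: p_ndvd_b; apply; rewrite -[b]/(absz b%:Z) def_b abszM dvdn_mulr.
Qed.

Theorem lemma3p9 (p : nat) (gT : finGroupType) (G : {group gT}) :
  prime p -> (p.-group G)%g ->
  cyclic (G^`(1))%g -> #|G^`(1)%g| = p ->
  (G^`(1) \subset 'Z(G))%g ->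
  (forall i : Iirr G, ~~ ('chi_i \is a linear_char) -> cfaithful 'chi_i) ->
  forall x : gT, x \in (G :\: 'Z(G))%g -> ~ nr_in_Zp_group_ring p G x.
Proof.
move=> p_pr _ _ cardG' G'Z nl_fful x xGZ nr_integral.
have [Gx nZx] := setDP xGZ.
have xVGZ : (x^-1)%g \in (G :\: 'Z(G))%g by rewrite in_setD !groupV nZx.
have nr_coeff_x : nr_coeff G x x = (p%:R)^-1.
  rewrite -cardG' nr_coeff_self_nonlinear_vanish // => i nl_chi.
  exact: fful_irr_vanish_off_center G'Z (nl_fful i nl_chi) xVGZ.
by apply: (not_p_integral_invn p_pr); rewrite -nr_coeff_x; apply: nr_integral.
Qed.
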